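(* Let $S$ be a nonempty complete lattice and let $F:S\to 2^S$ be a lower V-ascending correspondence. Suppose that for every $x\in S$, the value $F(x)$ has a least element. Then $F$ has a least fixed point, i.e. the set $\{s\in S:s\in F(s)\}$ is nonempty and has a least element.
   Context: A poset $S$ is a complete lattice if every nonempty subset has a supremum and infimum in $S$. A correspondence $F:S\to 2^S$ on a lattice $S$ is lower V-ascending if for all $x<x'$ in $S$ (strict inequality), every $y\in F(x)$ and every $y'\in F(x')$, one has $y\wedge y'\in F(x)$. *)

From mathcomp Require Import all_boot all_order.
Set Implicit Arguments. Unset Strict Implicit. Unset Printing Implicit Defensive.
Import Order.TTheory.
Local Open Scope order_scope.

(* Subsets of a type are predicates [T -> Prop]; a correspondence
   F : S -> 2^S is a function [S -> (S -> Prop)], with [y \in F x] read as [F x y]. *)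

Definition is_upper_bound d (T : porderType d) (A : T -> Prop) (u : T) :=
  forall a, A a -> a <= u.
Definition is_lower_bound d (T : porderType d) (A : T -> Prop) (l : T) :=
  forall a, A a -> l <= a.

Definition is_sup d (T : porderType d) (A : T -> Prop) (s : T) :=
  is_upper_bound A s /\ forall u, is_upper_bound A u -> s <= u.
Definition is_inf d (T : porderType d) (A : T -> Prop) (s : T) :=
  is_lower_bound A s /\ forall l, is_lower_bound A l -> l <= s.

Definition complete_lattice d (T : porderType d) :=
  forall A : T -> Prop, (exists a, A a) ->
    (exists s, is_sup A s) /\ (exists s, is_inf A s).

Definition is_least d (T : porderType d) (A : T -> Prop) (m : T) :=
  A m /\ forall a, A a -> m <= a.

Definition lower_V_ascending d (T : latticeType d) (F : T -> T -> Prop) :=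
  forall x x' : T, x < x' ->
    forall y y', F x y -> F x' y' -> F x (y `&` y').

Definition fixed_points d (T : porderType d) (F : T -> T -> Prop) : T -> Prop :=
  fun s => F s s.

(* The least-element selection f x := min F(x) is monotone: for x < x', the
   meet min F(x) `&` min F(x') lies in F(x), so min F(x) <= min F(x').
   Tarski's argument then applies to f: the infimum of the nonempty set
   {x | f x <= x} (it contains the top of S) is a fixed point of f, hence of F,
   and it lies below every fixed point t of F, since f t <= t. *)

From mathcomp Require Import all_boot all_order.
Set Implicit Arguments. Unset Strict Implicit. Unset Printing Implicit Defensive.

Import Order.TTheory.
Local Open Scope order_scope.

Section LeastSelection.

Variables (d : Order.disp_t) (T : latticeType d) (F : T -> T -> Prop).
Hypothesis F_lva : lower_V_ascending F.

Lemma lower_V_ascending_least_le x x' y y' :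
  x <= x' -> is_least (F x) y -> is_least (F x') y' -> y <= y'.
Proof.
move=> le_xx' [Fy least_y] [Fy' _].
case: (eqVneq x x') => [eq_xx' | ne_xx']; first by apply: least_y; rewrite eq_xx'.
have lt_xx' : x < x' by rewrite lt_neqAle ne_xx'.
exact: le_trans (least_y _ (F_lva lt_xx' Fy Fy')) (leIr _ _).
Qed.

End LeastSelection.

Section MonotoneTarski.

Variables (d : Order.disp_t) (T : porderType d) (R : T -> T -> Prop).
Hypothesis R_total : forall x, exists y, R x y.
Hypothesis R_mono : forall x x' y y', x <= x' -> R x y -> R x' y' -> y <= y'.

Definition deflationary_points : T -> Prop := fun x => exists2 y, R x y & y <= x.

Lemma upper_bound_deflationary s :
  is_upper_bound (fun _ => True) s -> deflationary_points s.
Proof. by move=> ub_s; have [y Rsy] := R_total s; exists y => //; apply: ub_s. Qed.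

Lemma inf_deflationary_fixed a : is_inf deflationary_points a -> R a a.
Proof.
move=> [lb_a glb_a]; have [b Rab] := R_total a.
have le_ba : b <= a.
  apply: glb_a => x [y Rxy le_yx].
  have le_ax : a <= x by apply: lb_a; exists y.
  exact: le_trans (R_mono le_ax Rab Rxy) le_yx.
have [c Rbc] := R_total b.
have le_ab : a <= b by apply: lb_a; exists c => //; exact: R_mono Rbc Rab.
have eq_ba : b = a by apply/le_anti; rewrite le_ba le_ab.
by rewrite -{2}eq_ba.
Qed.

End MonotoneTarski.

Theorem lemma2p10 (d : Order.disp_t) (S : latticeType d)
  (S_nonempty : exists x : S, True)
  (S_complete : complete_lattice S)
  (F : S -> S -> Prop)
  (F_lva : lower_V_ascending F)
  (F_least : forall x : S, exists m, is_least (F x) m) :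
  (exists s, fixed_points F s) /\ (exists m, is_least (fixed_points F) m).
Proof.
pose f_mono := lower_V_ascending_least_le F_lva.
pose A := deflationary_points (fun x => is_least (F x)).
have [[top [ub_top _]] _] := S_complete (fun _ => True) S_nonempty.
have A_top : A top := upper_bound_deflationary F_least ub_top.
have [_ [a inf_a]] := S_complete A (ex_intro _ top A_top).
have [Faa _] := inf_deflationary_fixed F_least f_mono inf_a.
split; first by exists a.
exists a; split => // t Ftt.
have [y [Fy least_y]] := F_least t.
by apply: inf_a.1; exists y; [split | apply: least_y].
Qed.
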